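(* Let $G$ be a finite group, let $p$ be a prime, and let $A$ be a subgroup of $G$ of maximum order among the self-centralizing subgroups of $G$ (subgroups $B$ with $C_G(B)=B$). \begin{enumerate} \item If $|G:A|=p$ and $|G:Z(G)|=p^i$ with $i>2$, then $A$ is the unique self-centralizing subgroup of $G$ of maximum order. The same conclusion holds if $p$ is the smallest prime divisor of $|G|$, $|G:A|=p$ and $|G:Z(G)|>p^2$. \item If $|G:A|=p^2$, $|G:Z(G)|=p^i$ with $i>4$, and $G$ possesses a subgroup $T$ of index $p$ in $G$ whose center has index $p^3$ in $G$, then $T$ is the unique subgroup of $G$ of index $p$ whose center has index $p^3$ in $G$. The same conclusion holds if $p$ is the smallest prime divisor of $|G|$, $|G:A|=p^2$, $|G:Z(G)|>p^4$, and $G$ possesses such a subgroup $T$. \item If $|G:A|=p^2$, $|G:Z(G)|=p^i$ with $i>4$, and $G$ does not possess a subgroup of index $p$ in $G$ whose center has index $p^3$ in $G$, then $A$ is the unique self-centralizing subgroup of $G$ of maximum order. The same conclusion holds if $p$ is the smallest prime divisor of $|G|$, $|G:A|=p^2$, $|G:Z(G)|>p^4$, and $G$ does not possess such a subgroup. \end{enumerate} *)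

From mathcomp Require Import all_boot all_fingroup all_solvable.
Set Implicit Arguments. Unset Strict Implicit. Unset Printing Implicit Defensive.
Local Open Scope group_scope.

Definition self_centralizing (gT : finGroupType) (G B : {group gT}) : Prop :=
  B \subset G /\ 'C_G(B) = B.

Definition max_self_centralizing (gT : finGroupType) (G A : {group gT}) : Prop :=
  self_centralizing G A /\
  forall B : {group gT}, self_centralizing G B -> (#|B| <= #|A|)%N.

Definition unique_max_self_centralizing (gT : finGroupType) (G A : {group gT}) : Prop :=
  max_self_centralizing G A /\
  forall B : {group gT}, max_self_centralizing G B -> B = A.

Definition index_p_center_p3 (gT : finGroupType) (G : {group gT}) (p : nat)
  (T : {group gT}) : Prop :=
  T \subset G /\ (#|G : T| = p)%N /\ (#|G : 'Z(T)| = p ^ 3)%N.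

From mathcomp Require Import all_boot all_fingroup all_solvable.
Set Implicit Arguments.
Unset Strict Implicit.
Unset Printing Implicit Defensive.

Local Open Scope group_scope.

(* If X, Y <= G and X :&: Y <= W <= G, the product formula gives
   |G:W| |G:<X,Y>| <= |G:X| |G:Y|.  Self-centralizing subgroups are abelian,
   and every abelian subgroup lies in a maximal abelian one, which is
   self-centralizing; so two distinct maximal ones A, B meet in the center of
   H = <A,B>, whence |H:Z(H)| <= |H:A|^2.  If |G:A| = p then H = G and
   |G:Z(G)| <= p^2.  If |G:A| = p^2, either H = G and |G:Z(G)| <= p^4, or
   |G:H| = |H:A| = p and |A:Z(H)| is a divisor of |G:Z(G)| in ]1, p], hence p
   when p is the least prime dividing |G:Z(G)|: then H has index p and
   |G:Z(H)| = p^3.  Finally, for two such subgroups T <> T', either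
   Z(T') is not in T and Z(T) :&: T' is central in G = <T, Z(T')>, or
   Z(T) Z(T') is abelian (so of order at most |A|) and Z(T) :&: Z(T') is
   central in G = <T, T'>; both give |G:Z(G)| <= p^4. *)

Lemma pdiv_leq_pdiv_dvd m d : (1 < d)%N -> (d %| m)%N -> (pdiv m <= pdiv d)%N.
Proof.
move=> d_gt1 dv_dm; apply: pdiv_min_dvd (prime_gt1 (pdiv_prime d_gt1)) _.
exact: dvdn_trans (pdiv_dvd d) dv_dm.
Qed.

Section SelfCentralizing.
Variable gT : finGroupType.
Implicit Types G H K A B T X Y W : {group gT}.

Lemma indexg_joinI_leq G X Y W : X \subset G -> Y \subset G -> W \subset G ->
  X :&: Y \subset W -> (#|G : W| * #|G : X <*> Y| <= #|G : X| * #|G : Y|)%N.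
Proof.
move=> sXG sYG sWG sXYW; have sJG : X <*> Y \subset G by rewrite join_subG sXG.
have cardXY : (#|X| * #|Y| <= #|W| * #|X <*> Y|)%N.
  rewrite mul_cardG mulnC leq_mul ?subset_leq_card //.
  by rewrite mul_subG ?joing_subl ?joing_subr.
rewrite -(@leq_pmul2l (#|X| * #|Y|)) ?muln_gt0 ?cardG_gt0 // [leqRHS]mulnACA.
rewrite !Lagrange //.
apply: leq_trans (_ : _ <= #|W| * #|X <*> Y| * (#|G : W| * #|G : X <*> Y|))%N _.
  by rewrite leq_mul2r cardXY orbT.
by rewrite mulnACA !Lagrange.
Qed.

Lemma sub_center_joing X Y W : W \subset X <*> Y -> W \subset 'C(X) ->
  W \subset 'C(Y) -> W \subset 'Z(X <*> Y).
Proof. by move=> sWJ cWX cWY; rewrite subsetI sWJ centY subsetI cWX. Qed.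

Lemma index_center_joing_abelian X Y : abelian X -> abelian Y ->
  (#|X <*> Y : 'Z(X <*> Y)| <= #|X <*> Y : X| * #|X <*> Y : Y|)%N.
Proof.
move=> cXX cYY; rewrite -[leqLHS]muln1 -(indexgg (X <*> Y)).
apply: indexg_joinI_leq; rewrite ?joing_subl ?joing_subr ?center_sub //.
apply: sub_center_joing.
- exact: subset_trans (subsetIl X Y) (joing_subl X Y).
- exact: subset_trans (subsetIl X Y) cXX.
- exact: subset_trans (subsetIr X Y) cYY.
Qed.

Lemma joing_prime_index G X Y : X \subset G -> prime #|G : X| ->
  Y \subset G -> ~~ (Y \subset X) -> X <*> Y = G.
Proof.
move=> sXG pX sYG nsYX; have /maxgroupP[_ maxX] := p_index_maximal sXG pX.
have sJG : X <*> Y \subset G by rewrite join_subG sXG.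
apply/eqP; rewrite eqEsubset sJG /=; apply: contraR nsYX => nsGJ.
by rewrite -(maxX (X <*> Y)%G) ?joing_subr ?joing_subl ?properE ?sJG.
Qed.

Lemma self_centralizing_abelian G B : self_centralizing G B -> abelian B.
Proof. by case=> _ defB; rewrite /abelian -{1}defB subsetIr. Qed.

Lemma center_sub_self_centralizing G B : self_centralizing G B ->
  'Z(G) \subset B.
Proof. by case=> sBG defB; rewrite -defB /center setIS // centS. Qed.

Lemma center_joing_sub_self_centralizing G B X : self_centralizing G B ->
  X \subset G -> 'Z(B <*> X) \subset B.
Proof.
case=> sBG defB sXG; rewrite -{2}defB subsetI.
rewrite (subset_trans (center_sub _)) ?join_subG ?sBG //=.
exact: subset_trans (subsetIr _ _) (centS (joing_subl B X)).
Qed.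

Lemma abelian_card_leq_max_self_centralizing G A X :
  max_self_centralizing G A -> X \subset G -> abelian X -> (#|X| <= #|A|)%N.
Proof.
case=> _ maxA sXG cXX.
pose abelian_subG := [pred M : {group gT} | (M \subset G) && abelian M].
have [M /maxgroupP[/andP[sMG cMM] maxM] sXM] :
    {M : {group gT} | maxgroup M abelian_subG & X \subset M}.
  by apply: maxgroup_exists; rewrite /= sXG.
apply: leq_trans (subset_leq_card sXM) (maxA M _); split=> //.
apply/eqP; rewrite eqEsubset subsetI sMG (cMM : M \subset 'C(M)) !andbT.
apply/subsetP=> x /setIP[xG cMx].
have := maxM (M <*> <[x]>)%G; rewrite /= join_subG sMG cycle_subG xG joing_subl.
rewrite abelianY cMM cycle_abelian cycle_subG cMx => /(_ isT isT) defM.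
by rewrite -defM mem_gen // inE cycle_id orbT.
Qed.

Lemma card_max_self_centralizing G A B : max_self_centralizing G A ->
  max_self_centralizing G B -> #|B| = #|A|.
Proof. by case=> scA maxA [scB maxB]; apply/eqP; rewrite eqn_leq maxA ?maxB. Qed.

Lemma max_self_centralizing_sub_eq G A B : max_self_centralizing G A ->
  max_self_centralizing G B -> B \subset A -> B = A.
Proof.
move=> mA mB sBA; apply: group_inj; apply/eqP.
by rewrite eqEcard sBA (card_max_self_centralizing mA mB) leqnn.
Qed.

Lemma unique_max_self_centralizing_sub G A : max_self_centralizing G A ->
  (forall B, max_self_centralizing G B -> B \subset A) ->
  unique_max_self_centralizing G A.
Proof.
move=> mA subA; split=> // B mB.
exact: max_self_centralizing_sub_eq mA mB (subA B mB).
Qed.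

Lemma leq_indexg_card G H K : H \subset G -> K \subset G -> (#|K| <= #|H|)%N ->
  (#|G : H| <= #|G : K|)%N.
Proof. by move=> sHG sKG leKH; rewrite -!divgS // leq_div2l. Qed.

Lemma index_max_self_centralizing G A B : max_self_centralizing G A ->
  max_self_centralizing G B -> #|G : B| = #|G : A|.
Proof.
move=> mA mB; have [[sAG _] _] := mA; have [[sBG _] _] := mB.
by rewrite -!divgS // (card_max_self_centralizing mA mB).
Qed.

Lemma index_center_leq_joing_max_self_centralizing G A B :
  max_self_centralizing G A -> max_self_centralizing G B -> A <*> B = G ->
  (#|G : 'Z(G)| <= #|G : A| ^ 2)%N.
Proof.
move=> mA mB defG; have [[scA _] [scB _]] := (mA, mB).
have := index_center_joing_abelian (self_centralizing_abelian scA)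
  (self_centralizing_abelian scB).
by rewrite defG (index_max_self_centralizing mA mB) mulnn.
Qed.

Lemma unique_max_self_centralizing_index_prime G A p : prime p ->
  max_self_centralizing G A -> #|G : A| = p -> (p ^ 2 < #|G : 'Z(G)|)%N ->
  unique_max_self_centralizing G A.
Proof.
move=> p_pr mA iA ltZ; apply: unique_max_self_centralizing_sub => // B mB.
have [[[sAG _] _] [[sBG _] _]] := (mA, mB).
apply/idPn => nsBA; have pA : prime #|G : A| by rewrite iA.
have := index_center_leq_joing_max_self_centralizing mA mB
  (joing_prime_index sAG pA sBG nsBA).
by rewrite iA leqNgt ltZ.
Qed.

Lemma index_center_leq_of_center_not_sub G T T' p : prime p ->
  index_p_center_p3 G p T -> index_p_center_p3 G p T' -> ~~ ('Z(T') \subset T) ->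
  (#|G : 'Z(G)| <= p ^ 4)%N.
Proof.
move=> p_pr [sTG [iT iZT]] [sT'G [iT' _]] nsZT'T.
have sZTG : 'Z(T) \subset G := subset_trans (center_sub T) sTG.
have sZT'G : 'Z(T') \subset G := subset_trans (center_sub T') sT'G.
have pT : prime #|G : T| by rewrite iT.
have defG := joing_prime_index sTG pT sZT'G nsZT'T.
have sZ : 'Z(T) :&: T' \subset 'Z(G).
  rewrite -defG; apply: sub_center_joing.
  - by rewrite defG subIset ?sZTG.
  - exact: subset_trans (subsetIl _ _) (subsetIr _ _).
  - by apply: subset_trans (subsetIr _ _) _; rewrite centsC; apply: subsetIr.
have := indexg_joinI_leq sZTG sT'G (center_sub G) sZ.
rewrite iZT iT' -expnSr => le.
by apply: leq_trans le; rewrite leq_pmulr ?indexg_gt0.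
Qed.

Lemma index_center_leq_of_center_sub G A T T' p : prime p ->
  max_self_centralizing G A -> #|G : A| = (p ^ 2)%N ->
  index_p_center_p3 G p T -> index_p_center_p3 G p T' ->
  'Z(T') \subset T -> ~~ (T' \subset T) -> (#|G : 'Z(G)| <= p ^ 4)%N.
Proof.
move=> p_pr mA iA [sTG [iT iZT]] [sT'G [_ iZT']] sZT'T nsT'T.
have sZTG : 'Z(T) \subset G := subset_trans (center_sub T) sTG.
have sZT'G : 'Z(T') \subset G := subset_trans (center_sub T') sT'G.
have pT : prime #|G : T| by rewrite iT.
have defG := joing_prime_index sTG pT sT'G nsT'T.
have sZ : 'Z(T) :&: 'Z(T') \subset 'Z(G).
  rewrite -defG; apply: sub_center_joing.
  - exact: subset_trans (subsetIl _ _) (subset_trans (center_sub T) (joing_subl T T')).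
  - exact: subset_trans (subsetIl _ _) (subsetIr _ _).
  - exact: subset_trans (subsetIr _ _) (subsetIr _ _).
have cZZ : abelian ('Z(T) <*> 'Z(T')).
  rewrite abelianY !center_abelian; apply: subset_trans sZT'T _.
  by rewrite centsC; apply: subsetIr.
have leAK : (p ^ 2 <= #|G : 'Z(T) <*> 'Z(T')|)%N.
  have sKG : 'Z(T) <*> 'Z(T') \subset G by rewrite join_subG sZTG.
  rewrite -iA (leq_indexg_card mA.1.1 sKG) //.
  exact: abelian_card_leq_max_self_centralizing mA sKG cZZ.
have := indexg_joinI_leq sZTG sZT'G (center_sub G) sZ.
rewrite iZT iZT' -expnD (_ : 3 + 3 = 4 + 2)%N // expnD => le.
rewrite -(@leq_pmul2r (p ^ 2)) ?expn_gt0 ?prime_gt0 //.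
by apply: leq_trans le; rewrite leq_mul2l leAK orbT.
Qed.

Lemma index_p_center_p3_uniq G A T T' p : prime p ->
  max_self_centralizing G A -> #|G : A| = (p ^ 2)%N -> (p ^ 4 < #|G : 'Z(G)|)%N ->
  index_p_center_p3 G p T -> index_p_center_p3 G p T' -> T' = T.
Proof.
move=> p_pr mA iA ltZ hT hT'; rewrite ltnNge in ltZ.
have [sZT'T | nsZT'T] := boolP ('Z(T') \subset T); last first.
  by rewrite (index_center_leq_of_center_not_sub p_pr hT hT' nsZT'T) in ltZ.
have [sT'T | nsT'T] := boolP (T' \subset T); last first.
  by rewrite (index_center_leq_of_center_sub p_pr mA iA hT hT' sZT'T nsT'T) in ltZ.
have [[sTG [idxT _]] [sT'G [idxT' _]]] := (hT, hT').
have cardT : #|T| = #|T'|.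
  by apply/eqP; rewrite -(eqn_pmul2r (prime_gt0 p_pr)) -{1}idxT -idxT' !Lagrange.
by apply: group_inj; apply/eqP; rewrite eqEcard sT'T cardT leqnn.
Qed.

Lemma prime_sq_factors p m n : prime p -> (m * n = p ^ 2)%N -> m != 1%N -> n != 1%N ->
  m = p /\ n = p.
Proof.
move=> p_pr defmn m_neq1 n_neq1; have p_gt0 := prime_gt0 p_pr.
have /(dvdn_pfactor _ _ p_pr)[[|[|[|k]]] // _ defm] : (m %| p ^ 2)%N.
- by rewrite -defmn dvdn_mulr.
- by rewrite defm in m_neq1.
- split; first by rewrite defm expn1.
  by apply/eqP; rewrite -(eqn_pmul2l p_gt0) -{1}(expn1 p) -defm defmn mulnn.
- move: defmn n_neq1; rewrite defm -{2}(muln1 (p ^ 2)%N) => /eqP.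
  by rewrite eqn_pmul2l ?expn_gt0 ?p_gt0 // => /eqP->.
Qed.

Lemma center_sub_center G H : H \subset G -> 'Z(G) \subset H -> 'Z(G) \subset 'Z(H).
Proof.
move=> sHG sZH; rewrite subsetI sZH.
exact: subset_trans (subsetIr _ _) (centS sHG).
Qed.

Lemma joing_max_self_centralizing_index_p_center_p3 G A B p : prime p ->
  max_self_centralizing G A -> max_self_centralizing G B -> ~~ (B \subset A) ->
  #|G : A| = (p ^ 2)%N -> (p <= pdiv #|G : 'Z(G)|)%N -> A <*> B != G ->
  index_p_center_p3 G p (A <*> B).
Proof.
move=> p_pr mA mB nsBA iA le_p_pdiv neqHG.
have [[scA _] [scB _]] := (mA, mB); have [[sAG defA] [sBG _]] := (scA, scB).
set H := (A <*> B)%G; have sAH : A \subset H := joing_subl A B.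
have sBH : B \subset H := joing_subr A B.
have sHG : H \subset G by rewrite join_subG sAG.
have [iH iHA] : #|G : H| = p /\ #|H : A| = p.
  apply: (prime_sq_factors p_pr); first by rewrite (Lagrange_index sHG sAH).
    by apply: contraNneq neqHG => /(index1g sHG)->.
  by apply: contraNneq nsBA => /(index1g sAH) ->.
have iHB : #|H : B| = p by rewrite -iHA -!divgS // (card_max_self_centralizing mA mB).
have sZHA : 'Z(H) \subset A := center_joing_sub_self_centralizing scA sBG.
have iAZ_gt1 : (1 < #|A : 'Z(H)|)%N.
  rewrite ltn_neqAle indexg_gt0 andbT eq_sym; apply: contra nsBA => /eqP.
  move/(index1g sZHA) => defZ; rewrite -defA subsetI sBG centsC -defZ.
  exact: subset_trans (subsetIr _ _) (centS sBH).
have iAZ_le : (#|A : 'Z(H)| <= p)%N.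
  have := index_center_joing_abelian (self_centralizing_abelian scA)
    (self_centralizing_abelian scB).
  by rewrite -/H iHB -(Lagrange_index sAH sZHA) iHA leq_pmul2l ?prime_gt0.
have iAZ_dvd : (#|A : 'Z(H)| %| #|G : 'Z(G)|)%N.
  apply: dvdn_trans (indexSg sZHA sAG) (indexgS G _).
  by rewrite center_sub_center // (subset_trans (center_sub_self_centralizing scA)).
have iAZ : #|A : 'Z(H)| = p.
  apply/eqP; rewrite eqn_leq iAZ_le (leq_trans le_p_pdiv) //.
  exact: pdiv_min_dvd iAZ_gt1 iAZ_dvd.
by split; rewrite // -(Lagrange_index sAG sZHA) iA iAZ -expnSr.
Qed.

Lemma unique_max_self_centralizing_index_prime_sq G A p : prime p ->
  max_self_centralizing G A -> #|G : A| = (p ^ 2)%N -> (p ^ 4 < #|G : 'Z(G)|)%N ->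
  (p <= pdiv #|G : 'Z(G)|)%N -> ~ (exists T, index_p_center_p3 G p T) ->
  unique_max_self_centralizing G A.
Proof.
move=> p_pr mA iA ltZ le_p_pdiv noT.
apply: unique_max_self_centralizing_sub => // B mB; apply/idPn => nsBA.
have [defG | neqHG] := eqVneq (A <*> B) G.
  have := index_center_leq_joing_max_self_centralizing mA mB defG.
  by rewrite iA -expnM leqNgt ltZ.
by apply: noT; exists (A <*> B)%G;
  apply: joing_max_self_centralizing_index_p_center_p3.
Qed.

End SelfCentralizing.

Theorem corollary2p2 (gT : finGroupType) (G A : {group gT}) (p : nat) :
  prime p -> max_self_centralizing G A ->
  (* (1) *)
  (((#|G : A| = p)%N -> (exists i, (#|G : 'Z(G)| = p ^ i)%N /\ (2 < i)%N) ->
      unique_max_self_centralizing G A) /\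
   ((p = pdiv #|G|)%N -> (#|G : A| = p)%N -> (p ^ 2 < #|G : 'Z(G)|)%N ->
      unique_max_self_centralizing G A)) /\
  (* (2) *)
  ((forall T : {group gT},
      (#|G : A| = p ^ 2)%N -> (exists i, (#|G : 'Z(G)| = p ^ i)%N /\ (4 < i)%N) ->
      index_p_center_p3 G p T ->
      forall T' : {group gT}, index_p_center_p3 G p T' -> T' = T) /\
   (forall T : {group gT},
      (p = pdiv #|G|)%N -> (#|G : A| = p ^ 2)%N -> (p ^ 4 < #|G : 'Z(G)|)%N ->
      index_p_center_p3 G p T ->
      forall T' : {group gT}, index_p_center_p3 G p T' -> T' = T)) /\
  (* (3) *)
  (((#|G : A| = p ^ 2)%N -> (exists i, (#|G : 'Z(G)| = p ^ i)%N /\ (4 < i)%N) ->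
      (~ exists T : {group gT}, index_p_center_p3 G p T) ->
      unique_max_self_centralizing G A) /\
   ((p = pdiv #|G|)%N -> (#|G : A| = p ^ 2)%N -> (p ^ 4 < #|G : 'Z(G)|)%N ->
      (~ exists T : {group gT}, index_p_center_p3 G p T) ->
      unique_max_self_centralizing G A)).
Proof.
move=> p_pr mA.
have power_index i j : #|G : 'Z(G)| = (p ^ i)%N -> (j < i)%N ->
    (p ^ j < #|G : 'Z(G)|)%N /\ (p <= pdiv #|G : 'Z(G)|)%N.
  move=> -> lt_ji; rewrite ltn_exp2l ?prime_gt1 //; split=> //.
  by case: i lt_ji => // i _; rewrite pdiv_pfactor.
have pdiv_index k : p = pdiv #|G| -> (p ^ k < #|G : 'Z(G)|)%N ->
    (p <= pdiv #|G : 'Z(G)|)%N.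
  move=> -> ltZ; apply: pdiv_leq_pdiv_dvd (dvdn_indexg _ _).
  by apply: leq_ltn_trans ltZ; rewrite expn_gt0 pdiv_gt0.
split; [split | split; [split | split]].
- move=> iA [i [/power_index idx /idx[ltZ _]]].
  exact: unique_max_self_centralizing_index_prime p_pr mA iA ltZ.
- move=> _ iA ltZ; exact: unique_max_self_centralizing_index_prime p_pr mA iA ltZ.
- move=> T iA [i [/power_index idx /idx[ltZ _]]] hT T' hT'.
  exact: index_p_center_p3_uniq p_pr mA iA ltZ hT hT'.
- move=> T _ iA ltZ hT T' hT'; exact: index_p_center_p3_uniq p_pr mA iA ltZ hT hT'.
- move=> iA [i [/power_index idx /idx[ltZ le_p_pdiv]]].
  exact: unique_max_self_centralizing_index_prime_sq p_pr mA iA ltZ le_p_pdiv.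
- move=> pdivG iA ltZ; have le_p_pdiv := pdiv_index 4 pdivG ltZ.
  exact: unique_max_self_centralizing_index_prime_sq p_pr mA iA ltZ le_p_pdiv.
Qed.
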